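(* Let $C$ be a convex subcomplex of a CAT(0) cube complex $X$ of finite dimension $n$, and let $r$ be a nonnegative integer. Then the combinatorial convex hull of $\mathrm{N}_r(C)$ is contained in $\mathrm{N}_{nr}(C)$.
   Context: $\mathrm{N}_r(C)$ denotes the set of vertices of $X$ at combinatorial distance at most $r$ from $C$ (the combinatorial distance being the path metric on the 1-skeleton). The combinatorial convex hull of a set of vertices is the intersection of all halfspaces containing it. *)

(* A CAT(0) cube complex X is modelled by its 1-skeleton,
   which is a median graph (Chepoi / Roller / Gerasimov). *)
From Stdlib Require Import Arith.

Fixpoint walk {V : Type} (adj : V -> V -> Prop) (x y : V) (k : nat) : Prop :=
  match k with
  | 0 => x = y
  | S k' => exists z, adj x z /\ walk adj z y k'
  end.

Definition is_dist {V : Type} (adj : V -> V -> Prop) (x y : V) (k : nat) : Prop :=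
  walk adj x y k /\ forall m, m < k -> ~ walk adj x y m.

Definition interval {V : Type} (adj : V -> V -> Prop) (x y z : V) : Prop :=
  exists a b, is_dist adj x z a /\ is_dist adj z y b /\ is_dist adj x y (a + b).

Definition median_graph {V : Type} (adj : V -> V -> Prop) : Prop :=
  (forall x y, adj x y -> adj y x) /\
  (forall x, ~ adj x x) /\
  (forall x y, exists k, walk adj x y k) /\
  (forall x y z, exists m,
      (interval adj x y m /\ interval adj y z m /\ interval adj x z m) /\
      forall m', interval adj x y m' /\ interval adj y z m' /\ interval adj x z m' -> m' = m).

(* f is an (induced) k-cube: vertices indexed by {0,1}^k (functions nat -> bool
   considered on the coordinates i < k) *)
Definition is_cube {V : Type} (adj : V -> V -> Prop) (k : nat) (f : (nat -> bool) -> V) : Prop :=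
  (forall a b, (forall i, i < k -> a i = b i) -> f a = f b) /\
  (forall a b, f a = f b -> forall i, i < k -> a i = b i) /\
  (forall a b, adj (f a) (f b) <->
     exists i, i < k /\ a i <> b i /\ forall j, j < k -> j <> i -> a j = b j).

Definition cube_dim {V : Type} (adj : V -> V -> Prop) (n : nat) : Prop :=
  (exists f, is_cube adj n f) /\ (forall k f, is_cube adj k f -> k <= n).

(* (vertex set of a) convex subcomplex: combinatorially convex *)
Definition convex {V : Type} (adj : V -> V -> Prop) (C : V -> Prop) : Prop :=
  forall x y z, C x -> C y -> interval adj x y z -> C z.

(* combinatorial halfspace: the side containing u of the hyperplane dual to the edge uv *)
Definition halfspace {V : Type} (adj : V -> V -> Prop) (H : V -> Prop) : Prop :=
  exists u v, adj u v /\
    forall x, H x <-> exists a b, is_dist adj x u a /\ is_dist adj x v b /\ a < b.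

Definition comb_hull {V : Type} (adj : V -> V -> Prop) (S : V -> Prop) (x : V) : Prop :=
  forall H, halfspace adj H -> (forall y, S y -> H y) -> H x.

Definition nbhd {V : Type} (adj : V -> V -> Prop) (r : nat) (C : V -> Prop) (x : V) : Prop :=
  exists c, C c /\ exists k, k <= r /\ walk adj c x k.

(* For r = 0 the claim says that the
   convex set C is cut out by halfspaces: the first edge of a geodesic from the
   gate of x in C to x separates them.  For the induction step let K be the hull
   of N_r(C); it is convex, lies in N_(nr)(C), and N_(r+1)(C) lies in N_1(K), so
   it suffices that the hull of N_1(K) lies in N_n(K).  Let x be at distance
   > n from K, p its gate in K, and consider the first n+1 edges of a geodesic
   from p to x.  If no halfspace dual to one of them contains N_1(K), each is
   crossed by some y_i in N_1(K), and the median of x, y_i and p is a neighbour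
   q_i of p in the interval I(p,x), across the same hyperplane.  No edge is
   parallel to two edges of a geodesic, so the q_i are distinct, and distinct
   neighbours of p in I(p,x) span a cube: a cube of dimension n+1 in X. *)

From Stdlib Require Import Arith Lia Wf_nat Classical IndefiniteDescription.

Lemma least_nat (P : nat -> Prop) :
  (exists n, P n) -> exists m, P m /\ forall k, P k -> m <= k.
Proof.
  intros Hex.
  destruct (dec_inh_nat_subset_has_unique_least_element P (fun n => classic (P n)) Hex)
    as [m [Hm _]].
  exists m; exact Hm.
Qed.

Lemma walk_cat V (adj : V -> V -> Prop) k1 k2 x y z :
  walk adj x y k1 -> walk adj y z k2 -> walk adj x z (k1 + k2).
Proof.
  revert x; induction k1 as [|k1 IH]; simpl; intros x H1 H2.
  - subst; exact H2.
  - destruct H1 as [w [Hxw Hw]]. exists w; eauto.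
Qed.

Lemma comb_hull_mono V (adj : V -> V -> Prop) (S T : V -> Prop) x :
  (forall y, S y -> T y) -> comb_hull adj S x -> comb_hull adj T x.
Proof. intros HST Hx H HH HT. apply Hx; auto. Qed.

Lemma comb_hull_incl V (adj : V -> V -> Prop) (S : V -> Prop) x : S x -> comb_hull adj S x.
Proof. intros Hx H _ HS. auto. Qed.

Lemma nbhd_mono V (adj : V -> V -> Prop) r (K L : V -> Prop) y :
  (forall c, K c -> L c) -> nbhd adj r K y -> nbhd adj r L y.
Proof. intros HKL [c [Hc Hw]]. exists c; auto. Qed.

Lemma nbhd_incl V (adj : V -> V -> Prop) r (K : V -> Prop) y : K y -> nbhd adj r K y.
Proof. intros Hy. exists y; split; [exact Hy|]. exists 0; split; [lia | reflexivity]. Qed.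

Lemma nbhd_zero V (adj : V -> V -> Prop) (K : V -> Prop) y : nbhd adj 0 K y <-> K y.
Proof.
  split; [|apply nbhd_incl].
  intros [c [Hc [k [Hk Hw]]]]. replace k with 0 in Hw by lia. simpl in Hw. subst. exact Hc.
Qed.

Lemma nbhd_nbhd V (adj : V -> V -> Prop) r s (K : V -> Prop) y :
  nbhd adj r (nbhd adj s K) y -> nbhd adj (s + r) K y.
Proof.
  intros [c' [[c [Hc [k1 [Hk1 W1]]]] [k2 [Hk2 W2]]]].
  exists c; split; [exact Hc|]. exists (k1 + k2); split; [lia|]. eapply walk_cat; eassumption.
Qed.

Section MedianGraph.

Variables (V : Type) (adj : V -> V -> Prop).
Hypothesis Hmed : median_graph adj.

Lemma adj_sym x y : adj x y -> adj y x.
Proof. destruct Hmed as [Hsym _]; auto. Qed.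

Lemma adj_irrefl x : ~ adj x x.
Proof. destruct Hmed as [_ [Hirr _]]; auto. Qed.

Lemma walk_rev k x y : walk adj x y k -> walk adj y x k.
Proof.
  revert x y; induction k as [|k IH]; intros x y H.
  - symmetry; exact H.
  - destruct H as [w [Hxw Hw]].
    rewrite <- Nat.add_1_r. apply walk_cat with w; [auto|].
    exists x; split; [apply adj_sym; auto | reflexivity].
Qed.

Lemma is_dist_exists x y : exists k, is_dist adj x y k.
Proof.
  destruct Hmed as [_ [_ [Hconn _]]].
  destruct (least_nat (walk adj x y) (Hconn x y)) as [k [Hk Hmin]].
  exists k; split; [exact Hk|]. intros m Hm Hw. specialize (Hmin m Hw). lia.
Qed.

Definition dist x y : nat :=
  proj1_sig (constructive_indefinite_description _ (is_dist_exists x y)).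

Lemma dist_is_dist x y : is_dist adj x y (dist x y).
Proof. exact (proj2_sig (constructive_indefinite_description _ (is_dist_exists x y))). Qed.

Lemma walk_dist x y : walk adj x y (dist x y).
Proof. apply dist_is_dist. Qed.

Lemma dist_le_walk x y k : walk adj x y k -> dist x y <= k.
Proof.
  intros Hw. destruct (le_lt_dec (dist x y) k) as [Hle|Hlt]; [exact Hle|].
  exfalso. exact (proj2 (dist_is_dist x y) k Hlt Hw).
Qed.

Lemma is_dist_dist x y k : is_dist adj x y k -> k = dist x y.
Proof.
  intros [Hw Hmin]. pose proof (dist_le_walk _ _ _ Hw).
  destruct (le_lt_dec k (dist x y)) as [Hle|Hlt]; [lia|].
  exfalso. exact (Hmin _ Hlt (walk_dist x y)).
Qed.

Lemma dist_xx x : dist x x = 0.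
Proof. pose proof (dist_le_walk x x 0 eq_refl). lia. Qed.

Lemma dist_eq0 x y : dist x y = 0 -> x = y.
Proof. intros H. pose proof (walk_dist x y) as W. rewrite H in W. exact W. Qed.

Lemma dist_sym x y : dist x y = dist y x.
Proof.
  pose proof (dist_le_walk _ _ _ (walk_rev _ _ _ (walk_dist x y))).
  pose proof (dist_le_walk _ _ _ (walk_rev _ _ _ (walk_dist y x))). lia.
Qed.

Lemma dist_triangle x y z : dist x z <= dist x y + dist y z.
Proof. apply dist_le_walk, walk_cat with y; apply walk_dist. Qed.

Lemma dist_adj x y : adj x y -> dist x y = 1.
Proof.
  intros H. assert (Hle : dist x y <= 1)
    by (apply dist_le_walk; exists y; split; [exact H | reflexivity]).
  destruct (dist x y) eqn:E; [|lia].
  apply dist_eq0 in E; subst. exfalso; exact (adj_irrefl _ H).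
Qed.

Lemma dist1_adj x y : dist x y = 1 -> adj x y.
Proof.
  intros H. pose proof (walk_dist x y) as W. rewrite H in W.
  destruct W as [z [Hz E]]. simpl in E; subst; exact Hz.
Qed.

Lemma dist_step x y k : dist x y = S k -> exists z, adj x z /\ dist z y = k.
Proof.
  intros H. pose proof (walk_dist x y) as W. rewrite H in W.
  destruct W as [z [Hz W]]. exists z; split; [exact Hz|].
  pose proof (dist_le_walk _ _ _ W). pose proof (dist_triangle x z y).
  rewrite (dist_adj _ _ Hz) in *. lia.
Qed.

Definition between a b z := dist a z + dist z b = dist a b.

Lemma interval_between a b z : interval adj a b z <-> between a b z.
Proof.
  unfold between. split.
  - intros [k [l [H1 [H2 H3]]]].
    apply is_dist_dist in H1, H2, H3. lia.
  - intros H. exists (dist a z), (dist z b).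
    rewrite H. repeat split; apply dist_is_dist.
Qed.

Lemma median_exists x y z : exists m,
  (between x y m /\ between y z m /\ between x z m) /\
  forall m', between x y m' -> between y z m' -> between x z m' -> m' = m.
Proof.
  destruct Hmed as [_ [_ [_ Hm]]]. destruct (Hm x y z) as [m [[H1 [H2 H3]] Hu]].
  exists m. split; [repeat split; apply interval_between; auto|].
  intros m' A B C. apply Hu. repeat split; apply interval_between; auto.
Qed.

Definition median x y z : V :=
  proj1_sig (constructive_indefinite_description _ (median_exists x y z)).

Lemma median_between x y z :
  between x y (median x y z) /\ between y z (median x y z) /\ between x z (median x y z).
Proof. exact (proj1 (proj2_sig (constructive_indefinite_description _ (median_exists x y z)))). Qed.

Lemma median_unique x y z m :
  between x y m -> between y z m -> between x z m -> m = median x y z.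
Proof.
  exact (proj2 (proj2_sig (constructive_indefinite_description _ (median_exists x y z))) m).
Qed.

Lemma dist_adj_cases a b y :
  adj a b -> dist y a = S (dist y b) \/ dist y b = S (dist y a).
Proof.
  intros Hab. pose proof (dist_adj _ _ Hab) as Eab.
  destruct (median_between a b y) as [H1 [H2 H3]].
  revert H1 H2 H3. generalize (median a b y). intros m H1 H2 H3.
  unfold between in *. rewrite (dist_sym y a), (dist_sym y b).
  destruct (dist a m) eqn:Eam.
  - apply dist_eq0 in Eam. subst m. rewrite (dist_sym b a) in H2. lia.
  - assert (Hmb : dist m b = 0) by lia. apply dist_eq0 in Hmb. subst m. lia.
Qed.

Lemma dist_common_neighbors a c c' : adj a c -> adj a c' -> c <> c' -> dist c c' = 2.
Proof.
  intros Hc Hc' Hne. pose proof (dist_triangle c a c') as T.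
  rewrite (dist_sym c a), (dist_adj _ _ Hc), (dist_adj _ _ Hc') in T.
  destruct (dist c c') as [|[|[|]]] eqn:E; try lia.
  - apply dist_eq0 in E; contradiction.
  - apply dist1_adj in E. destruct (dist_adj_cases _ _ a E) as [F|F];
      rewrite (dist_adj _ _ Hc), (dist_adj _ _ Hc') in F; lia.
Qed.

Lemma quadrangle x x1 x2 y k : adj x x1 -> adj x x2 -> x1 <> x2 ->
  dist x1 y = k -> dist x2 y = k -> dist x y = S k ->
  exists w, adj x1 w /\ adj x2 w /\ S (dist w y) = k.
Proof.
  intros A1 A2 Hne E1 E2 E.
  pose proof (dist_common_neighbors _ _ _ A1 A2 Hne) as D12.
  destruct (median_between x1 x2 y) as [H1 [H2 H3]].
  revert H1 H2 H3. generalize (median x1 x2 y). intros m H1 H2 H3.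
  unfold between in *. rewrite D12 in H1.
  assert (dist x1 m = 0 \/ dist x1 m = 1 \/ dist x1 m = 2) as [F|[F|F]] by lia.
  - apply dist_eq0 in F. subst m. rewrite (dist_sym x2 x1) in H2. lia.
  - exists m. split; [apply dist1_adj; exact F|].
    split; [apply dist1_adj; rewrite dist_sym; lia | lia].
  - assert (Hm : dist m x2 = 0) by lia. apply dist_eq0 in Hm. subst m. lia.
Qed.

Lemma no_K23 a b c1 c2 c3 :
  adj a c1 -> adj c1 b -> adj a c2 -> adj c2 b -> adj a c3 -> adj c3 b ->
  c1 <> c2 -> c1 <> c3 -> c2 <> c3 -> a = b.
Proof.
  intros A1 B1 A2 B2 A3 B3 N12 N13 N23.
  assert (Hz : forall z, adj z c1 -> adj z c2 -> adj z c3 -> z = median c1 c2 c3).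
  { intros z Z1 Z2 Z3. apply median_unique; unfold between.
    - rewrite (dist_common_neighbors _ _ _ Z1 Z2 N12), (dist_sym c1 z),
        (dist_adj _ _ Z1), (dist_adj _ _ Z2). lia.
    - rewrite (dist_common_neighbors _ _ _ Z2 Z3 N23), (dist_sym c2 z),
        (dist_adj _ _ Z2), (dist_adj _ _ Z3). lia.
    - rewrite (dist_common_neighbors _ _ _ Z1 Z3 N13), (dist_sym c1 z),
        (dist_adj _ _ Z1), (dist_adj _ _ Z3). lia. }
  rewrite (Hz a), (Hz b); auto; apply adj_sym; auto.
Qed.

Definition side u v y := dist y u < dist y v.

Lemma side_dist u v y : adj u v -> side u v y -> dist y v = S (dist y u).
Proof. unfold side; intros Huv Hy. destruct (dist_adj_cases _ _ y Huv); lia. Qed.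

Lemma not_side u v y : adj u v -> ~ side u v y -> side v u y.
Proof. unfold side; intros Huv Hy. destruct (dist_adj_cases _ _ y Huv); lia. Qed.

Lemma side_asym u v y : side u v y -> ~ side v u y.
Proof. unfold side; lia. Qed.

Lemma side_xx u v : adj u v -> side u v u.
Proof. unfold side; intros Huv. rewrite dist_xx, (dist_adj _ _ Huv). lia. Qed.

(* The edges uv and xx' are the two ends of a ladder of k squares. *)
Lemma theta_ladder k u v x x' : adj u v -> adj x x' ->
  dist x u = k -> dist x' v = k -> dist x v = S k -> dist x' u = S k ->
  forall y, side u v y -> side x x' y.
Proof.
  revert u v x x'.
  induction k as [|k IH]; intros u v x x' Huv Hxx' H1 H2 H3 H4 y Hy.
  - apply dist_eq0 in H1, H2. subst. exact Hy.
  - destruct (dist_step _ _ _ H1) as [x1 [Hxx1 Hx1u]].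
    pose proof (dist_adj _ _ Huv) as Euv. pose proof (dist_adj _ _ Hxx1) as Exx1.
    assert (Hx1v : dist x1 v = S k).
    { pose proof (dist_triangle x x1 v). pose proof (dist_triangle x1 u v). lia. }
    assert (N1 : x1 <> x') by (intro E; subst; lia).
    destruct (quadrangle x x1 x' v (S k) Hxx1 Hxx' N1 Hx1v H2 H3) as [x1' [A1 [A2 E1]]].
    assert (Hx1'u : dist x1' u = S k).
    { pose proof (dist_triangle x1' v u) as T1. pose proof (dist_triangle x' x1' u) as T2.
      rewrite (dist_sym v u), Euv in T1. rewrite (dist_adj _ _ A2) in T2. lia. }
    pose proof (IH u v x1 x1' Huv A1 Hx1u ltac:(lia) Hx1v Hx1'u y Hy) as Hy1.
    apply NNPP; intro Hn. apply N1.
    (* otherwise y is equidistant from x1 and x', and x, x1' and the vertex w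
       given by the quadrangle condition are three common neighbours of them *)
    unfold side in *.
    destruct (dist_adj_cases _ _ y Hxx') as [F1|F1]; [|lia].
    destruct (dist_adj_cases _ _ y A1) as [F2|F2]; [lia|].
    destruct (dist_adj_cases _ _ y Hxx1) as [F3|F3];
    destruct (dist_adj_cases _ _ y A2) as [F4|F4]; try lia.
    destruct (quadrangle x x1 x' y (dist y x1) Hxx1 Hxx' N1 ltac:(apply dist_sym)
      ltac:(rewrite dist_sym; lia) ltac:(rewrite dist_sym; lia)) as [w [W1 [W2 W3]]].
    rewrite (dist_sym w y) in W3.
    apply (no_K23 x1 x' x x1' w);
      first [assumption | apply adj_sym; assumption | intro E; subst; lia].
Qed.

Lemma side_theta u v a b : adj u v -> adj a b -> side u v a -> side v u b ->
  forall y, side u v y <-> side a b y.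
Proof.
  intros Huv Hab Ha Hb.
  pose proof (side_dist _ _ _ Huv Ha) as Fa.
  pose proof (side_dist _ _ _ (adj_sym _ _ Huv) Hb) as Fb.
  assert (E : dist b v = dist a u).
  { pose proof (dist_triangle b a u). pose proof (dist_triangle a b v).
    rewrite (dist_sym b a), (dist_adj _ _ Hab) in *. lia. }
  intros y; split; intros Hy.
  - apply (theta_ladder (dist a u) u v a b); auto; lia.
  - apply NNPP; intro Hn. apply (side_asym a b y Hy).
    apply (theta_ladder (dist a u) v u b a); try apply adj_sym; auto; try lia.
    apply not_side; auto.
Qed.

Lemma geodesic_crosses u v x z : adj u v -> side u v x -> ~ side u v z ->
  exists a b, adj a b /\ side u v a /\ ~ side u v b /\ dist x a + S (dist b z) = dist x z.
Proof.
  intros Huv Hx Hz. remember (dist x z) as k eqn:E. symmetry in E. revert x Hx E.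
  induction k as [|k IH]; intros x Hx E.
  - apply dist_eq0 in E; subst; contradiction.
  - destruct (dist_step _ _ _ E) as [x1 [A1 E1]].
    destruct (classic (side u v x1)) as [H1|H1].
    + destruct (IH x1 H1 E1) as [a [b [Ab [Ha [Hb Hs]]]]].
      exists a, b. repeat split; auto.
      pose proof (dist_triangle x x1 a). pose proof (dist_triangle x a z).
      pose proof (dist_triangle a b z).
      rewrite (dist_adj _ _ A1), (dist_adj _ _ Ab) in *. lia.
    + exists x, x1. repeat split; auto. rewrite dist_xx. lia.
Qed.

Lemma side_convex u v x y z : adj u v -> side u v x -> side u v y -> between x y z ->
  side u v z.
Proof.
  intros Huv Hx Hy Hz. apply NNPP; intro Hn.
  destruct (geodesic_crosses u v x z Huv Hx Hn) as [a [b [Ab [Ha [Hb Hs]]]]].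
  pose proof (side_theta u v a b Huv Ab Ha (not_side _ _ _ Huv Hb)) as Th.
  apply Th in Hx, Hy. pose proof (side_dist _ _ _ Ab Hy) as Fy.
  (* a geodesic from x to y through z would have to cross the edge ab twice *)
  unfold between, side in *.
  pose proof (dist_triangle b z y). pose proof (dist_triangle x a y).
  rewrite (dist_sym b y), (dist_sym a y), (dist_sym z y) in *. lia.
Qed.

Lemma convex_between K a b z : convex adj K -> K a -> K b -> between a b z -> K z.
Proof. intros HK Ha Hb Hz. apply (HK a b z Ha Hb), interval_between, Hz. Qed.

Lemma nearest_exists (K : V -> Prop) x :
  (exists c, K c) -> exists p, K p /\ forall c, K c -> dist x p <= dist x c.
Proof.
  intros [c Hc].
  destruct (least_nat (fun k => exists c, K c /\ dist x c = k)) as [m [[p [Hp E]] Hm]].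
  - exists (dist x c), c; auto.
  - exists p; split; [exact Hp|]. intros c' Hc'. rewrite E. apply Hm. exists c'; auto.
Qed.

Lemma nearest_gate K x p : convex adj K -> K p -> (forall c, K c -> dist x p <= dist x c) ->
  forall c, K c -> dist x c = dist x p + dist p c.
Proof.
  intros HK Hp Hmin c Hc.
  destruct (median_between x p c) as [H1 [H2 H3]].
  assert (Km : K (median x p c)) by (apply (convex_between K p c); auto).
  pose proof (Hmin _ Km). revert H1 H2 H3 Km H. generalize (median x p c).
  intros m H1 H2 H3 Km Hle. unfold between in *.
  assert (Hmp : dist m p = 0) by lia. apply dist_eq0 in Hmp. subst m. lia.
Qed.

Lemma gate_side (K : V -> Prop) x p u v : adj u v ->
  (forall c, K c -> dist x c = dist x p + dist p c) ->
  side u v p -> side v u x -> forall c, K c -> side u v c.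
Proof.
  intros Huv Hgate Hp Hx c Hc. apply NNPP; intro Hn.
  apply (side_asym u v p Hp).
  apply (side_convex v u x c p); auto using adj_sym, not_side.
  unfold between. rewrite (Hgate c Hc). lia.
Qed.

Lemma separate_from_convex K x : convex adj K -> (exists c, K c) -> ~ K x ->
  exists u v, adj u v /\ (forall y, K y -> side u v y) /\ ~ side u v x.
Proof.
  intros HK Hne Hx. destruct (nearest_exists K x Hne) as [p [Hp Hmin]].
  pose proof (nearest_gate K x p HK Hp Hmin) as Hgate.
  destruct (dist p x) as [|k] eqn:E; [apply dist_eq0 in E; subst; contradiction|].
  destruct (dist_step _ _ _ E) as [p1 [Hpp1 E1]].
  assert (Hx1 : side p1 p x).
  { unfold side. rewrite (dist_sym x p1), (dist_sym x p). lia. }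
  exists p, p1. split; [exact Hpp1|]. split.
  - apply (gate_side K x p); auto using side_xx.
  - apply side_asym, Hx1.
Qed.

Definition geodesic (z : nat -> V) (D : nat) :=
  forall i j, i <= j <= D -> dist (z i) (z j) = j - i.

Lemma geodesic_exists D p x : dist p x = D ->
  exists z, z 0 = p /\ z D = x /\ geodesic z D.
Proof.
  revert p; induction D as [|D IH]; intros p E.
  - apply dist_eq0 in E. exists (fun _ => p). repeat split; auto.
    intros i j Hij. rewrite dist_xx. lia.
  - destruct (dist_step _ _ _ E) as [p1 [Hpp1 E1]].
    destruct (IH p1 E1) as [z [Z0 [ZD Zgeo]]].
    exists (fun i => match i with 0 => p | S i' => z i' end).
    repeat split; [exact ZD|]. intros [|i] [|j] Hij; simpl.
    + rewrite dist_xx; lia.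
    + pose proof (dist_triangle p p1 (z j)). pose proof (dist_triangle p (z j) x).
      pose proof (Zgeo 0 j ltac:(lia)). pose proof (Zgeo j D ltac:(lia)).
      rewrite Z0, ZD, (dist_adj _ _ Hpp1) in *. lia.
    + lia.
    + rewrite (Zgeo i j ltac:(lia)). lia.
Qed.

Lemma geodesic_adj z D i : geodesic z D -> i < D -> adj (z i) (z (S i)).
Proof. intros Hz Hi. apply dist1_adj. rewrite (Hz i (S i)); lia. Qed.

Lemma geodesic_no_parallel_edges z D i j w w' : geodesic z D -> i < j < D -> adj w w' ->
  side (z (S i)) (z i) w' -> side (z i) (z (S i)) w ->
  side (z (S j)) (z j) w' -> side (z j) (z (S j)) w -> False.
Proof.
  intros Hz Hij Hww' Hi1 Hi2 Hj1 Hj2.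
  pose proof (geodesic_adj z D i Hz ltac:(lia)) as Ai.
  pose proof (geodesic_adj z D j Hz ltac:(lia)) as Aj.
  pose proof (side_theta _ _ _ _ (adj_sym _ _ Ai) (adj_sym _ _ Hww') Hi1 Hi2) as Thi.
  pose proof (side_theta _ _ _ _ (adj_sym _ _ Aj) (adj_sym _ _ Hww') Hj1 Hj2) as Thj.
  pose proof (side_xx _ _ (adj_sym _ _ Ai)) as Hs.
  apply Thi, Thj in Hs. unfold side in Hs.
  rewrite (Hz (S i) (S j) ltac:(lia)), (Hz (S i) j ltac:(lia)) in Hs. lia.
Qed.

(* Neighbours q_0, ..., q_(N-1) of p in the interval I(p,x) span an N-cube at p:
   the vertex with coordinates a is reached from p by crossing, for each j < N
   with a j = true in increasing order, the hyperplane dual to p q_j, each time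
   through the median of the current vertex, q_j and x. *)
Section CubeSpan.

Variables (p x : V) (N : nat) (q : nat -> V).
Hypothesis q_adj : forall j, j < N -> adj p (q j).
Hypothesis q_between : forall j, j < N -> between p x (q j).
Hypothesis q_inj : forall i j, i < N -> j < N -> q i = q j -> i = j.

Definition crosses j s t := side (q j) p s <-> ~ side (q j) p t.

Lemma crosses_sym j s t : crosses j s t -> crosses j t s.
Proof. unfold crosses; intros H. destruct (classic (side (q j) p s)); tauto. Qed.

Lemma crosses_unique_oriented i j s t : i < N -> j < N -> adj s t ->
  side (q i) p t -> ~ side (q i) p s -> crosses j s t -> i = j.
Proof.
  intros Hi Hj Hst Hit His Hjst.
  pose proof (side_theta _ _ _ _ (adj_sym _ _ (q_adj i Hi)) (adj_sym _ _ Hst) Hit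
    (not_side _ _ _ (adj_sym _ _ (q_adj i Hi)) His)) as Thi.
  destruct (classic (side (q j) p t)) as [Hjt|Hjt].
  - assert (Hjs : ~ side (q j) p s) by (unfold crosses in Hjst; tauto).
    pose proof (side_theta _ _ _ _ (adj_sym _ _ (q_adj j Hj)) (adj_sym _ _ Hst) Hjt
      (not_side _ _ _ (adj_sym _ _ (q_adj j Hj)) Hjs)) as Thj.
    pose proof (side_xx _ _ (adj_sym _ _ (q_adj i Hi))) as Hq.
    apply Thi, Thj in Hq. unfold side in Hq.
    rewrite (dist_sym (q i) p), (dist_adj _ _ (q_adj i Hi)) in Hq.
    apply q_inj; auto. apply dist_eq0. lia.
  - assert (Hjs : side (q j) p s) by (unfold crosses in Hjst; tauto).
    pose proof (side_theta _ _ _ _ (adj_sym _ _ (q_adj j Hj)) Hst Hjs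
      (not_side _ _ _ (adj_sym _ _ (q_adj j Hj)) Hjt)) as Thj.
    exfalso.
    destruct (classic (side t s p)) as [Hp|Hp].
    + apply Thi in Hp. exact (side_asym _ _ _ (side_xx _ _ (q_adj i Hi)) Hp).
    + apply not_side, Thj in Hp; [|exact (adj_sym _ _ Hst)].
      exact (side_asym _ _ _ (side_xx _ _ (q_adj j Hj)) Hp).
Qed.

Lemma crosses_unique i j s t : i < N -> j < N -> adj s t ->
  crosses i s t -> crosses j s t -> i = j.
Proof.
  intros Hi Hj Hst Hist Hjst.
  destruct (classic (side (q i) p t)) as [Ht|Ht].
  - apply (crosses_unique_oriented i j s t); auto. unfold crosses in Hist; tauto.
  - apply (crosses_unique_oriented i j t s); auto using adj_sym, crosses_sym.
    unfold crosses in Hist; tauto.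
Qed.

Lemma side_q_x j : j < N -> side (q j) p x.
Proof.
  intros Hj. pose proof (q_between j Hj) as Hb. unfold between, side in *.
  rewrite (dist_adj _ _ (q_adj j Hj)) in Hb. rewrite (dist_sym x (q j)), (dist_sym x p). lia.
Qed.

Definition step k y := median y (q k) x.

Lemma step_spec k y : k < N -> between p x y -> ~ side (q k) p y ->
  adj y (step k y) /\ side (q k) p (step k y) /\ between p x (step k y) /\
  dist p (step k y) = S (dist p y).
Proof.
  intros Hk Hy Hny.
  pose proof (q_adj k Hk) as Hpq. pose proof (q_between k Hk) as Hqx.
  pose proof (side_dist _ _ _ Hpq (not_side _ _ _ (adj_sym _ _ Hpq) Hny)) as Hyq.
  destruct (median_between y (q k) x) as [H1 [H2 H3]]. unfold step.
  revert H1 H2 H3. generalize (median y (q k) x). intros m H1 H2 H3.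
  pose proof (dist_triangle p (q k) m). pose proof (dist_triangle p m x).
  unfold between, side in *. rewrite (dist_adj _ _ Hpq) in *.
  rewrite (dist_sym y p), (dist_sym y (q k)), (dist_sym m p), (dist_sym m (q k)) in *.
  assert (Hym : dist y m = 1) by lia.
  repeat split; [apply dist1_adj; exact Hym | lia ..].
Qed.

Lemma step_adj k y0 y : k < N -> adj y0 y -> between p x y0 -> between p x y ->
  ~ side (q k) p y0 -> ~ side (q k) p y -> dist p y = S (dist p y0) ->
  adj (step k y0) (step k y).
Proof.
  intros Hk A I0 I1 N0 N1 E.
  pose proof (q_adj k Hk) as Hpq. pose proof (q_between k Hk) as Hqx.
  destruct (step_spec k y0 Hk I0 N0) as [A0 [S0 [J0 E0]]].
  revert A0 S0 J0 E0. generalize (step k y0). intros g0 A0 S0 J0 E0.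
  assert (Ne : y <> g0) by (intro F; subst; contradiction).
  unfold between in I0, I1, J0, Hqx. rewrite (dist_adj _ _ Hpq) in Hqx.
  destruct (quadrangle y0 y g0 x (dist y x) A A0 Ne eq_refl ltac:(lia) ltac:(lia))
    as [w [W1 [W2 W3]]].
  assert (Sw : side (q k) p w).
  { apply (side_convex _ _ g0 x w); auto using adj_sym.
    - apply side_q_x, Hk.
    - unfold between. rewrite (dist_adj _ _ W2). lia. }
  assert (Dpw : dist w p = S (S (dist p y0))).
  { pose proof (dist_triangle p g0 w). pose proof (dist_triangle p w x).
    rewrite (dist_adj _ _ W2), (dist_sym w p) in *. lia. }
  pose proof (side_dist _ _ _ (adj_sym _ _ Hpq) Sw) as Dwq.
  pose proof (side_dist _ _ _ Hpq (not_side _ _ _ (adj_sym _ _ Hpq) N1)) as Dyq.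
  assert (Ew : w = step k y).
  { apply median_unique; unfold between in *.
    - rewrite (dist_adj _ _ W1), (dist_sym y p) in *. lia.
    - rewrite (dist_sym (q k) w). lia.
    - rewrite (dist_adj _ _ W1). lia. }
  rewrite <- Ew. exact W2.
Qed.

Fixpoint vertex (k : nat) (a : nat -> bool) : V :=
  match k with
  | 0 => p
  | S k' => if a k' then step k' (vertex k' a) else vertex k' a
  end.

Lemma vertex_ext k a b : (forall j, j < k -> a j = b j) -> vertex k a = vertex k b.
Proof.
  induction k as [|k IH]; intros Hab; simpl; [reflexivity|].
  rewrite (Hab k), IH by first [lia | intros; apply Hab; lia]. reflexivity.
Qed.

Lemma vertex_between_outside k a : k <= N ->
  between p x (vertex k a) /\ forall m, k <= m < N -> ~ side (q m) p (vertex k a).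
Proof.
  induction k as [|k IH]; intros Hk; simpl.
  - split; [unfold between; rewrite dist_xx; lia|].
    intros m Hm. apply side_asym, side_xx, q_adj; lia.
  - destruct (IH ltac:(lia)) as [Hb Hout].
    destruct (a k); [|split; [exact Hb | intros m Hm; apply Hout; lia]].
    destruct (step_spec k _ ltac:(lia) Hb (Hout k ltac:(lia))) as [_ [Hs [Hb' _]]].
    split; [exact Hb'|]. intros m Hm Hsm.
    assert (k = m); [|lia].
    apply (crosses_unique k m (vertex k a) (step k (vertex k a))); try lia;
      [apply step_spec; auto; lia | ..]; unfold crosses;
      pose proof (Hout k ltac:(lia)); pose proof (Hout m ltac:(lia)); tauto.
Qed.

Lemma vertex_side k a j : k <= N -> j < k ->
  (side (q j) p (vertex k a) <-> a j = true).
Proof.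
  revert j; induction k as [|k IH]; intros j Hk Hj; [lia|]. simpl.
  destruct (vertex_between_outside k a ltac:(lia)) as [Hb Hout].
  destruct (step_spec k _ ltac:(lia) Hb (Hout k ltac:(lia))) as [Hadj [Hs _]].
  destruct (Nat.eq_dec j k) as [->|Hjk].
  - destruct (a k); [tauto|].
    split; [intro H; exfalso; exact (Hout k ltac:(lia) H) | discriminate].
  - rewrite <- (IH j ltac:(lia) ltac:(lia)). destruct (a k); [|reflexivity].
    destruct (classic (side (q j) p (vertex k a)));
    destruct (classic (side (q j) p (step k (vertex k a)))); try tauto;
    exfalso; apply Hjk; symmetry;
    apply (crosses_unique k j (vertex k a) (step k (vertex k a))); try lia; auto;
    unfold crosses; pose proof (Hout k ltac:(lia)); tauto.
Qed.

Lemma vertex_flip k a b j : k <= N -> j < k -> a j = false -> b j = true ->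
  (forall i, i < k -> i <> j -> a i = b i) ->
  adj (vertex k a) (vertex k b) /\ dist p (vertex k b) = S (dist p (vertex k a)).
Proof.
  induction k as [|k IH]; intros Hk Hj Ha Hb Hab; [lia|]. simpl.
  destruct (vertex_between_outside k a ltac:(lia)) as [Hba Houta].
  destruct (vertex_between_outside k b ltac:(lia)) as [Hbb Houtb].
  destruct (step_spec k _ ltac:(lia) Hba (Houta k ltac:(lia))) as [Hadja [_ [_ Ea]]].
  destruct (step_spec k _ ltac:(lia) Hbb (Houtb k ltac:(lia))) as [_ [_ [_ Eb]]].
  destruct (Nat.eq_dec j k) as [->|Hjk].
  - rewrite Ha, Hb, (vertex_ext k b a) by (intros i Hi; symmetry; apply Hab; lia).
    auto.
  - destruct (IH ltac:(lia) ltac:(lia) Ha Hb ltac:(intros; apply Hab; lia)) as [Hadj Hd].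
    rewrite <- (Hab k) by lia. destruct (a k); [|auto].
    split; [apply step_adj; auto; lia | lia].
Qed.

Lemma vertex_crosses a b i : i < N -> a i <> b i -> crosses i (vertex N a) (vertex N b).
Proof.
  intros Hi Hne. unfold crosses.
  rewrite (vertex_side N a i), (vertex_side N b i) by lia.
  destruct (a i), (b i); intuition congruence.
Qed.

Lemma vertex_cube : is_cube adj N (vertex N).
Proof.
  split; [|split].
  - apply vertex_ext.
  - intros a b E i Hi. apply Bool.eq_true_iff_eq.
    rewrite <- (vertex_side N a i), <- (vertex_side N b i), E by lia. reflexivity.
  - intros a b. split.
    + intros Hadj. destruct (classic (exists i, i < N /\ a i <> b i)) as [[i [Hi Hne]]|Hall].
      * exists i. repeat split; auto. intros j Hj Hji. apply NNPP; intro Hne'.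
        apply Hji, eq_sym, (crosses_unique i j (vertex N a) (vertex N b));
          auto using vertex_crosses.
      * rewrite (vertex_ext N a b) in Hadj
          by (intros j Hj; apply NNPP; intro Hne; apply Hall; eauto).
        exfalso. exact (adj_irrefl _ Hadj).
    + intros [i [Hi [Hne Hoth]]]. destruct (a i) eqn:Ea.
      * apply adj_sym, (vertex_flip N b a i); auto; [destruct (b i); congruence|].
        intros j Hj Hji. symmetry. auto.
      * apply (vertex_flip N a b i); auto. destruct (b i); congruence.
Qed.

End CubeSpan.
Lemma nbhd_dist r K y : nbhd adj r K y <-> exists c, K c /\ dist c y <= r.
Proof.
  split.
  - intros [c [Hc [k [Hk W]]]]. exists c; split; [exact Hc|].
    pose proof (dist_le_walk _ _ _ W). lia.
  - intros [c [Hc H]]. exists c; split; [exact Hc|]. exists (dist c y); split; auto using walk_dist.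
Qed.

Lemma median_toward_gate K x p u v y : convex adj K -> K p ->
  (forall c, K c -> dist x c = dist x p + dist p c) ->
  adj u v -> side u v x -> side v u p -> nbhd adj 1 K y -> side u v y ->
  adj p (median x y p) /\ side u v (median x y p) /\ between p x (median x y p).
Proof.
  intros HK Hp Hgate Huv Hx Hpv Hy1 Hy.
  apply nbhd_dist in Hy1. destruct Hy1 as [c [Hc Hcy]].
  pose proof (gate_side K x p v u (adj_sym _ _ Huv) Hgate Hpv Hx) as HKv.
  assert (Hny : ~ K y) by (intro Ky; exact (side_asym _ _ _ (HKv y Ky) Hy)).
  assert (Hnear : forall c', K c' -> 1 <= dist y c').
  { intros c' Hc'. destruct (dist y c') eqn:E; [|lia].
    apply dist_eq0 in E. subst. contradiction. }
  assert (Ecy : dist c y = 1) by (specialize (Hnear c Hc); rewrite dist_sym in Hnear; lia).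
  assert (Hgy : dist y p = dist y c + dist c p).
  { apply (nearest_gate K y c HK Hc); auto. intros c' Hc'.
    rewrite (dist_sym y c), Ecy. auto. }
  destruct (median_between x y p) as [H1 [H2 H3]].
  assert (Hm : side u v (median x y p)) by (apply (side_convex u v x y); auto).
  revert H1 H2 H3 Hm. generalize (median x y p). intros m H1 H2 H3 Hm.
  assert (Hmp : dist m p <> 0)
    by (intro E; apply dist_eq0 in E; subst; exact (side_asym _ _ _ Hpv Hm)).
  (* d(x,p) + d(p,c) = d(x,c) <= d(x,m) + d(m,y) + 1 forces d(m,p) <= 1 *)
  pose proof (Hgate c Hc). pose proof (dist_triangle x m c). pose proof (dist_triangle m y c).
  unfold between in *.
  rewrite (dist_sym y c), (dist_sym m y), (dist_sym p c), (dist_sym m p) in *.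
  rewrite (dist_sym m x), (dist_sym p x).
  split; [apply dist1_adj; lia | split; [exact Hm | lia]].
Qed.

Lemma geodesic_side z D i : geodesic z D -> i < D ->
  side (z i) (z (S i)) (z 0) /\ side (z (S i)) (z i) (z D).
Proof.
  intros Hz Hi. unfold side.
  rewrite (Hz 0 i), (Hz 0 (S i)), (dist_sym (z D) (z (S i))), (dist_sym (z D) (z i)),
    (Hz (S i) D), (Hz i D) by lia.
  lia.
Qed.

Lemma separate_from_nbhd1 n K x : cube_dim adj n -> convex adj K -> (exists c, K c) ->
  (forall c, K c -> n < dist c x) ->
  exists u v, adj u v /\ (forall y, nbhd adj 1 K y -> side u v y) /\ ~ side u v x.
Proof.
  intros [_ Hdim] HK Hne Hfar.
  destruct (nearest_exists K x Hne) as [p [Hp Hmin]].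
  pose proof (nearest_gate K x p HK Hp Hmin) as Hgate.
  destruct (geodesic_exists (dist p x) p x eq_refl) as [z [Z0 [ZD Hz]]].
  pose proof (Hfar p Hp) as Hpx.
  apply NNPP; intro Hnone.
  assert (Hy : forall i, exists y, i <= n -> nbhd adj 1 K y /\ side (z (S i)) (z i) y).
  { intros i. destruct (le_lt_dec i n) as [Hi|Hi]; [|exists x; lia].
    apply NNPP; intro Hno. apply Hnone. exists (z i), (z (S i)).
    split; [apply (geodesic_adj z (dist p x)); auto; lia|]. split.
    - intros y Hy. apply NNPP; intro Hn. apply Hno. exists y. intros _.
      split; [exact Hy|].
      apply not_side; [apply (geodesic_adj z (dist p x)); auto; lia | exact Hn].
    - apply side_asym. rewrite <- ZD. apply (geodesic_side z); auto; lia. }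
  destruct (functional_choice _ Hy) as [yf Hyf].
  set (qf i := median x (yf i) p).
  assert (Hq : forall i, i <= n ->
    adj p (qf i) /\ side (z (S i)) (z i) (qf i) /\ between p x (qf i)).
  { intros i Hi. destruct (Hyf i Hi) as [Hy1 Hys].
    destruct (geodesic_side z (dist p x) i Hz ltac:(lia)) as [Sp Sx]. rewrite Z0 in Sp.
    rewrite ZD in Sx. apply (median_toward_gate K); auto.
    apply adj_sym, (geodesic_adj z (dist p x)); auto; lia. }
  assert (Hparallel : forall i j, i < j <= n -> qf i = qf j -> False).
  { intros i j Hij E.
    destruct (Hq i ltac:(lia)) as [Ai [Si _]]. destruct (Hq j ltac:(lia)) as [_ [Sj _]].
    destruct (geodesic_side z (dist p x) i Hz ltac:(lia)) as [Spi _].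
    destruct (geodesic_side z (dist p x) j Hz ltac:(lia)) as [Spj _].
    rewrite Z0 in Spi, Spj. rewrite <- E in Sj.
    exact (geodesic_no_parallel_edges z (dist p x) i j p (qf i) Hz ltac:(lia) Ai Si Spi Sj Spj). }
  assert (Hcube := vertex_cube p x (S n) qf
    ltac:(intros j Hj; apply Hq; lia) ltac:(intros j Hj; apply Hq; lia)
    ltac:(intros i j Hi Hj E; destruct (lt_eq_lt_dec i j) as [[L|L]|L]; auto;
          exfalso; [apply (Hparallel i j) | apply (Hparallel j i)]; auto; lia)).
  apply Hdim in Hcube. lia.
Qed.

Lemma side_is_dist u v y :
  side u v y <-> exists a b, is_dist adj y u a /\ is_dist adj y v b /\ a < b.
Proof.
  split.
  - intros Hy. exists (dist y u), (dist y v). auto using dist_is_dist.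
  - intros [k [l [Hk [Hl Hkl]]]]. apply is_dist_dist in Hk, Hl. subst. exact Hkl.
Qed.

Lemma halfspace_side H : halfspace adj H ->
  exists u v, adj u v /\ forall y, H y <-> side u v y.
Proof.
  intros [u [v [Huv HH]]]. exists u, v; split; [exact Huv|].
  intros y. rewrite HH, side_is_dist. reflexivity.
Qed.

Lemma side_halfspace u v : adj u v -> halfspace adj (side u v).
Proof. intros Huv. exists u, v; split; [exact Huv|]. intros y. apply side_is_dist. Qed.

Lemma comb_hull_convex S : convex adj (comb_hull adj S).
Proof.
  intros a b z Ha Hb Hz H HH HS. apply interval_between in Hz.
  destruct (halfspace_side H HH) as [u [v [Huv Hside]]].
  apply Hside, (side_convex u v a b z Huv);
    [apply Hside, (Ha H HH HS) | apply Hside, (Hb H HH HS) | exact Hz].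
Qed.

Lemma comb_hull_of_convex K x : convex adj K -> (exists c, K c) ->
  comb_hull adj K x -> K x.
Proof.
  intros HK Hne Hx. apply NNPP; intro Hn.
  destruct (separate_from_convex K x HK Hne Hn) as [u [v [Huv [HKs Hxs]]]].
  exact (Hxs (Hx _ (side_halfspace u v Huv) HKs)).
Qed.

Lemma comb_hull_nbhd1 n K x : cube_dim adj n -> convex adj K -> (exists c, K c) ->
  comb_hull adj (nbhd adj 1 K) x -> nbhd adj n K x.
Proof.
  intros Hdim HK Hne Hx. apply nbhd_dist, NNPP; intro Hn.
  assert (Hfar : forall c, K c -> n < dist c x)
    by (intros c Hc; apply Nat.nle_gt; intro Hle; apply Hn; exists c; auto).
  destruct (separate_from_nbhd1 n K x Hdim HK Hne Hfar) as [u [v [Huv [HKs Hxs]]]].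
  exact (Hxs (Hx _ (side_halfspace u v Huv) HKs)).
Qed.

Lemma nbhd_succ r K y : nbhd adj (S r) K y -> nbhd adj 1 (nbhd adj r K) y.
Proof.
  intros [c [Hc [[|k] [Hk W]]]].
  - simpl in W. subst c. apply nbhd_incl, nbhd_incl, Hc.
  - apply walk_rev in W. destruct W as [z [Hyz Wz]]. exists z; split.
    + exists c; split; [exact Hc|]. exists k; split; [lia | apply walk_rev, Wz].
    + exists 1; split; [lia|]. exists y; split; [apply adj_sym, Hyz | reflexivity].
Qed.

End MedianGraph.

Theorem lemma3p8 (V : Type) (adj : V -> V -> Prop) (n : nat) (C : V -> Prop) (r : nat) :
  median_graph adj -> cube_dim adj n ->
  (exists c, C c) -> convex adj C ->
  forall x, comb_hull adj (nbhd adj r C) x -> nbhd adj (n * r) C x.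
Proof.
  intros Hmed Hdim [c0 Hc0] Hconv.
  induction r as [|r IH]; intros x Hx.
  - rewrite Nat.mul_0_r. apply nbhd_incl.
    apply (comb_hull_mono _ _ _ C), (comb_hull_of_convex _ _ Hmed) in Hx; auto.
    + exists c0; exact Hc0.
    + intros y Hy. apply nbhd_zero in Hy. exact Hy.
  - set (K := comb_hull adj (nbhd adj r C)).
    assert (HxK : comb_hull adj (nbhd adj 1 K) x).
    { apply (comb_hull_mono _ _ (nbhd adj (S r) C)); [|exact Hx].
      intros y Hy. apply (nbhd_mono _ _ _ (nbhd adj r C)), (nbhd_succ _ _ Hmed), Hy.
      apply comb_hull_incl. }
    assert (HKne : exists c, K c) by (exists c0; apply comb_hull_incl, nbhd_incl, Hc0).
    pose proof (comb_hull_nbhd1 _ _ Hmed n K x Hdim (comb_hull_convex _ _ Hmed _) HKne HxK) as Hn.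
    rewrite Nat.mul_succ_r. apply nbhd_nbhd, (nbhd_mono _ _ _ K); [exact IH | exact Hn].
Qed.
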